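(* Let $p\ge3$ be a prime power. Then for every $m\ge1$, $\mathfrak L(p,0)$ has a weak (square) representation over a finite set of size $p^{2m}$.
   Context: $\mathfrak L(p,0)$ (for $p\ge3$) is the finite symmetric integral relation algebra with atoms $1',a_0,\dots,a_p$, where for $0\le i,j\le p$, $i\ne j$: $a_i;a_i=1'+a_i$ and $a_i;a_j=0'\cdot\overline{a_i+a_j}$ with $0'=\overline{1'}$. A weak square representation over a set $D$ is an injective map $\theta$ into $\mathcal P(D\times D)$ with $0^\theta=\emptyset$, $1^\theta=D\times D$, $(x\cdot y)^\theta=x^\theta\cap y^\theta$, $(1')^\theta=$ the identity relation on $D$, $\breve x^\theta=(x^\theta)^{-1}$, $(x;y)^\theta=x^\theta|y^\theta$ (relational composition); it need not respect $+$ or complement. *)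

From mathcomp Require Import all_boot.
Set Implicit Arguments. Unset Strict Implicit. Unset Printing Implicit Defensive.

Definition prime_power (p : nat) : Prop :=
  exists q k : nat, prime q /\ 0 < k /\ p = q ^ k.

(* Atoms of L(p,0): None = identity 1', Some i = a_i for i in {0..p}. *)
Definition atom (p : nat) := option 'I_p.+1.

(* Elements of L(p,0): sets of atoms (finite relation algebra = complex
   algebra of its atom structure). *)
Definition Lelt (p : nat) := {set atom p}.

Definition atom_comp (p : nat) (x y : atom p) : {set atom p} :=
  match x, y with
  | None, _ => [set y]
  | _, None => [set x]
  | Some i, Some j =>
      if i == j then [set None; Some i]
      else [set z : atom p | match z with
                             | None => false
                             | Some k => (k != i) && (k != j) end]
  end.

Definition Lcomp (p : nat) (X Y : Lelt p) : Lelt p :=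
  [set z | [exists x in X, exists y in Y, z \in atom_comp x y]].

(* Converse: L(p,0) is symmetric, every atom is self-converse. *)
Definition Lconv (p : nat) (X : Lelt p) : Lelt p := X.

Definition Lone (p : nat) : Lelt p := setT.
Definition Lzero (p : nat) : Lelt p := set0.
Definition Lid (p : nat) : Lelt p := [set None].

Definition rel_comp (D : finType) (R S : {set D * D}) : {set D * D} :=
  [set u | [exists d, ((u.1, d) \in R) && ((d, u.2) \in S)]].
Definition rel_inv (D : finType) (R : {set D * D}) : {set D * D} :=
  [set u | (u.2, u.1) \in R].
Definition rel_id (D : finType) : {set D * D} := [set u | u.1 == u.2].

Definition weak_rep (p : nat) (D : finType) (theta : Lelt p -> {set D * D}) : Prop :=
  injective theta /\
  theta (Lzero p) = set0 /\
  theta (Lone p) = setT /\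
  (forall x y, theta (x :&: y) = theta x :&: theta y) /\
  theta (Lid p) = rel_id D /\
  (forall x, theta (Lconv x) = rel_inv (theta x)) /\
  (forall x y, theta (Lcomp x y) = rel_comp (theta x) (theta y)).

From HB Require Import structures.
From mathcomp Require Import all_boot all_algebra all_field.
From mathcomp Require Import ring.

(* Let F be the field with p elements and V = F^2.  The p+1 lines through the
   origin of V are labelled by the atoms a_0, ..., a_p; colour the vector 0
   by 1' and every other vector by the line through it.  This colouring
   realises the atom table of L(p,0): a vector w is a sum a + b with a of
   colour x and b of colour y exactly when the colour of w lies in x;y.
   Indeed two nonzero vectors of one line sum to every point of that line
   (this needs p >= 3), and since V is the direct sum of any two distinct
   lines, nonzero vectors of two distinct lines sum to exactly the points
   lying on neither line.

   Section PowerRepresentation shows that any realising colouring of a finite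
   abelian group V yields, for every m >= 1, a weak representation over V^m:
   two tuples are related by X when every coordinate difference has its
   colour in X.  Meets, the identity, converse and composition are preserved
   coordinatewise (joins are not, hence "weak"). *)

Set Implicit Arguments. Unset Strict Implicit.

Import GRing.Theory.
Local Open Scope ring_scope.

Section PowerRepresentation.

Variables (p : nat) (V : finZmodType) (colour : V -> atom p).

Hypothesis colour_eq0 : forall v, (colour v == None) = (v == 0).
Hypothesis colour_opp : forall v, colour (- v) = colour v.
Hypothesis colour_surj : forall z, exists v, colour v = z.
Hypothesis colour_sum : forall x y w,
  (exists a, colour a = x /\ colour (w - a) = y) <-> colour w \in atom_comp x y.

Lemma colour_Lcomp X Y w :
  colour w \in Lcomp X Y <-> exists a, colour a \in X /\ colour (w - a) \in Y.
Proof.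
rewrite inE; split.
- case/existsP => x /andP[xX /existsP[y /andP[yY /colour_sum[a [ax ay]]]]].
  by exists a; rewrite ax ay.
- case=> a [aX aY]; apply/existsP; exists (colour a); rewrite aX /=.
  apply/existsP; exists (colour (w - a)); rewrite aY /=.
  by apply/colour_sum; exists a.
Qed.

Variables (m : nat) (m_gt0 : (0 < m)%N).

Local Notation tuple := {ffun 'I_m -> V}.

Definition coord_rel (X : Lelt p) : {set tuple * tuple} :=
  [set u : tuple * tuple | [forall k, colour (u.2 k - u.1 k) \in X]].

Lemma coord_relE X (u : tuple * tuple) :
  (u \in coord_rel X) = [forall k, colour (u.2 k - u.1 k) \in X].
Proof. by rewrite inE. Qed.

(* Injectivity: the pair (0, (w,...,w)) is related by X iff colour w is in X;
   this is where m >= 1 is needed. *)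
Lemma coord_rel_inj : injective coord_rel.
Proof.
move=> X Y eqXY; apply/setP => z; have [w <-] := colour_surj z.
have diag Z : (([ffun=> 0], [ffun=> w]) \in coord_rel Z) = (colour w \in Z).
  rewrite coord_relE; apply/forallP/idP => [/(_ (Ordinal m_gt0))|wZ k];
    by rewrite !ffunE subr0.
by rewrite -!diag eqXY.
Qed.

Lemma coord_rel0 : coord_rel (Lzero p) = set0.
Proof.
apply/setP => u; rewrite coord_relE inE.
by apply/negP => /forallP/(_ (Ordinal m_gt0)); rewrite inE.
Qed.

Lemma coord_rel1 : coord_rel (Lone p) = setT.
Proof.
by apply/setP => u; rewrite coord_relE inE; apply/forallP => k; rewrite inE.
Qed.

Lemma coord_relI X Y : coord_rel (X :&: Y) = coord_rel X :&: coord_rel Y.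
Proof.
apply/setP => u; rewrite in_setI !coord_relE.
apply/forallP/andP => [XY | [/forallP uX /forallP uY] k].
  by split; apply/forallP => k; have := XY k; rewrite inE => /andP[].
by rewrite inE uX uY.
Qed.

Lemma coord_rel_id : coord_rel (Lid p) = rel_id _.
Proof.
apply/setP => [[u1 u2]]; rewrite coord_relE !inE /=.
apply/forallP/eqP => [eq_u | -> k]; last by rewrite inE colour_eq0 subrr.
apply/ffunP => k; apply/esym/eqP; rewrite -subr_eq0 -colour_eq0 -in_set1.
exact: eq_u.
Qed.

Lemma coord_rel_conv X : coord_rel (Lconv X) = rel_inv (coord_rel X).
Proof.
apply/setP => [[u1 u2]]; rewrite /rel_inv !inE /=.
by apply: eq_forallb => k; rewrite -opprB colour_opp.
Qed.

(* Composition: a witness tuple is assembled from one witness per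
   coordinate, given by [colour_Lcomp]. *)
Lemma coord_rel_comp X Y :
  coord_rel (Lcomp X Y) = rel_comp (coord_rel X) (coord_rel Y).
Proof.
apply/setP => [[u1 u2]]; rewrite coord_relE inE /=; apply/forallP/existsP.
- move=> XY; have /fin_all_exists[a Ha] k := (colour_Lcomp _ _ _).1 (XY k).
  exists [ffun k => u1 k + a k]; rewrite !coord_relE /=.
  apply/andP; split; apply/forallP => k; rewrite ffunE; have [aX aY] := Ha k.
    by rewrite addrC addKr.
  by rewrite opprD addrA.
- case=> d /andP[]; rewrite !coord_relE /= => /forallP dX /forallP dY k.
  apply/colour_Lcomp; exists (d k - u1 k); split; first exact: dX.
  by rewrite opprB addrA subrK.
Qed.

Lemma coord_rel_weak_rep : weak_rep coord_rel.
Proof.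
split; first exact: coord_rel_inj.
split; first exact: coord_rel0.
split; first exact: coord_rel1.
split; first exact: coord_relI.
split; first exact: coord_rel_id.
split; first exact: coord_rel_conv.
exact: coord_rel_comp.
Qed.

End PowerRepresentation.

Definition plane (F : finFieldType) := (F * F)%type.
HB.instance Definition _ (F : finFieldType) :=
  GRing.Zmodule.copy (plane F) (F * F)%type.
HB.instance Definition _ (F : finFieldType) :=
  Finite.copy (plane F) (F * F)%type.

Section PlaneColouring.

Variable F : finFieldType.
Implicit Types (a b v w : plane F) (c : F).

Lemma plane_eq v w : v.1 = w.1 -> v.2 = w.2 -> v = w.
Proof. by case: v w => v1 v2 [w1 w2] /= -> ->. Qed.

Lemma plane_eq0 v : (v == 0) = (v.1 == 0) && (v.2 == 0).
Proof. by case: v. Qed.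

Definition scalev c v : plane F := (c * v.1, c * v.2).

Lemma scalev_eq0 c v : (scalev c v == 0) = (c == 0) || (v == 0).
Proof.
rewrite !plane_eq0 /= !mulf_eq0.
by case: (c == 0); rewrite //= andbb.
Qed.

Lemma subr_scalev c v : v - scalev c v = scalev (1 - c) v.
Proof. by apply: plane_eq => /=; ring. Qed.

Definition det a b : F := a.1 * b.2 - a.2 * b.1.

Lemma detB a v w : det a (v - w) = det a v - det a w.
Proof. by rewrite /det /=; ring. Qed.

Lemma detZ a c v : det a (scalev c v) = c * det a v.
Proof. by rewrite /det /=; ring. Qed.

Lemma det_self a : det a a = 0.
Proof. by rewrite /det mulrC subrr. Qed.

Lemma cramer a b v : det a b != 0 ->
  v = scalev (det a v / det a b) b - scalev (det b v / det a b) a.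
Proof. by rewrite /det => ab; apply: plane_eq => /=; field. Qed.
Variables (p : nat) (card_F : #|F| = p) (p_gt2 : (2 < p)%N).

(* The p+1 slopes (None is the vertical slope), labelled by 'I_p.+1. *)
Lemma card_slopes : #|{: option F}| = p.+1.
Proof. by rewrite card_option card_F. Qed.

Definition slope (i : 'I_p.+1) : option F :=
  enum_val (cast_ord (esym card_slopes) i).

Lemma slope_inj : injective slope.
Proof. by move=> i j /enum_val_inj /cast_ord_inj. Qed.

Lemma slope_surj s : exists i, slope i = s.
Proof.
exists (cast_ord card_slopes (enum_rank s)).
by rewrite /slope cast_ordK enum_rankK.
Qed.

Definition dir i : plane F := if slope i is Some t then (1, t) else (0, 1).

Definition on_line i v : bool := det (dir i) v == 0.

Lemma dir_neq0 i : dir i != 0.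
Proof.
by rewrite plane_eq0 /dir; case: (slope i) => [t|] /=; rewrite oner_eq0 ?andbF.
Qed.

Lemma on_line_dir i : on_line i (dir i).
Proof. by rewrite /on_line det_self. Qed.

Lemma on_lineB i v w : on_line i v -> on_line i w -> on_line i (v - w).
Proof. by rewrite /on_line detB => /eqP-> /eqP->; rewrite subrr. Qed.

Lemma on_lineZ i c v : on_line i v -> on_line i (scalev c v).
Proof. by rewrite /on_line detZ => /eqP->; rewrite mulr0. Qed.

Lemma on_line0 i : on_line i 0.
Proof. by rewrite -(subrr (dir i)) on_lineB ?on_line_dir. Qed.

Lemma det_dir i j : i != j -> det (dir i) (dir j) != 0.
Proof.
move=> neq_ij.
have : slope i != slope j by apply: contra neq_ij => /eqP/slope_inj->.
rewrite /det /dir; case: (slope i) => [s|]; case: (slope j) => [t|] //= neq_st.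
- by rewrite mul1r mulr1 subr_eq0; apply: contra neq_st => /eqP->.
- by rewrite mul1r mulr0 subr0 oner_eq0.
- by rewrite mul0r mul1r sub0r oppr_eq0 oner_eq0.
Qed.

Lemma on_two_lines i j v : i != j -> on_line i v -> on_line j v -> v = 0.
Proof.
move=> /det_dir Dij /eqP iv /eqP jv.
by rewrite (cramer v Dij) iv jv !mul0r /scalev /= !mul0r subrr.
Qed.

Lemma on_some_line v : exists i, on_line i v.
Proof.
case: v => v1 v2; have [v10 | v1_neq0] := eqVneq v1 0.
- have [i si] := slope_surj None; exists i.
  by rewrite /on_line /dir si /det /= v10 mul0r mulr0 subr0.
- have [i si] := slope_surj (Some (v2 / v1)); exists i.
  by rewrite /on_line /dir si /det /= mul1r divfK // subrr.
Qed.

Lemma on_lineN i v : on_line i (- v) = on_line i v.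
Proof.
apply/idP/idP => [/(on_lineB (on_line0 i))|iv]; first by rewrite sub0r opprK.
by rewrite -sub0r on_lineB ?on_line0.
Qed.

Lemma on_line_unique i k v : v != 0 -> on_line k v -> on_line i v = (k == i).
Proof.
move=> v0 kv; have [<- // | neq_ki] := eqVneq k i.
by apply/negP => iv; move: v0; rewrite (on_two_lines neq_ki kv iv) eqxx.
Qed.

Definition line_colour v : atom p :=
  if v == 0 then None else [pick i | on_line i v].

Lemma line_colour_eq0 v : (line_colour v == None) = (v == 0).
Proof.
rewrite /line_colour; case: (eqVneq v 0) => //= _.
by case: pickP => // no_line; have [i] := on_some_line v; rewrite no_line.
Qed.

Lemma line_colourP v i : line_colour v = Some i <-> v != 0 /\ on_line i v.
Proof.
rewrite /line_colour; case: (eqVneq v 0) => [-> | v0]; first by split=> [|[]].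
case: pickP => [k kv | no_line]; last first.
  by have [k] := on_some_line v; rewrite no_line.
by rewrite (on_line_unique i v0 kv); split=> [[->] | [_ /eqP->]].
Qed.

Lemma line_colour_opp v : line_colour (- v) = line_colour v.
Proof.
rewrite /line_colour oppr_eq0; case: ifP => // _.
by apply: eq_pick => i; rewrite /= on_lineN.
Qed.

Lemma line_colour_surj z : exists v, line_colour v = z.
Proof.
case: z => [i|]; last by exists 0; apply/eqP; rewrite line_colour_eq0.
by exists (dir i); apply/line_colourP; rewrite dir_neq0 on_line_dir.
Qed.

Lemma scalar_not01 : exists c : F, (c != 0) && (c != 1).
Proof.
have : ~~ ([set: F] \subset [set 0; 1]).
  apply: contraL p_gt2 => /subset_leq_card.
  rewrite cardsT card_F cards2 -leqNgt.
  by move/leq_trans; apply; rewrite ltnS leq_b1.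
by case/subsetPn => c _; rewrite !inE negb_or; exists c.
Qed.

Lemma same_line_sum i w :
  (exists a, [/\ a != 0, on_line i a, w - a != 0 & on_line i (w - a)]) <->
  on_line i w.
Proof.
split=> [[a [_ ia _ iwa]] | iw].
  have -> : w = (w - a) - (- a) by rewrite opprK subrK.
  by rewrite on_lineB ?on_lineN.
have [c /andP[c0 c1]] := scalar_not01.
have [-> | w0] := eqVneq w 0.
  exists (dir i); rewrite sub0r oppr_eq0 on_lineN dir_neq0 on_line_dir.
  by split.
exists (scalev c w); rewrite subr_scalev !scalev_eq0 subr_eq0 (eq_sym 1).
by rewrite (negbTE c0) (negbTE c1) (negbTE w0) !on_lineZ.
Qed.

(* Nonzero vectors of two distinct lines sum exactly to the points off both
   lines: decompose along the basis formed by the two directions. *)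
Lemma two_lines_sum i j w : i != j ->
  (exists a, [/\ a != 0, on_line i a, w - a != 0 & on_line j (w - a)]) <->
  [&& w != 0, ~~ on_line i w & ~~ on_line j w].
Proof.
move=> neq_ij; split=> [[a [a0 ia wa0 jwa]] | /and3P[w0 /negP iw /negP jw]].
  have jw_ja : on_line j w -> on_line j a.
    by move=> jw; rewrite -[a](subKr w) on_lineB.
  apply/and3P; split.
  - apply: contra a0 => /eqP w0; move: jwa; rewrite w0 sub0r on_lineN => ja.
    by rewrite (on_two_lines neq_ij ia ja).
  - apply/negP => iw; move: wa0.
    by rewrite (on_two_lines neq_ij (on_lineB iw ia) jwa) eqxx.
  - apply/negP => /jw_ja ja; move: a0.
    by rewrite (on_two_lines neq_ij ia ja) eqxx.
have Dij := det_dir neq_ij.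
have coord_neq0 k : ~ on_line k w -> det (dir k) w / det (dir i) (dir j) != 0.
  by move=> kw; rewrite mulf_neq0 ?invr_neq0 //; apply/negP.
move: (cramer w Dij) (coord_neq0 _ iw) (coord_neq0 _ jw).
set s := _ / _; set t := _ / _ => Ew s0 t0.
exists (- scalev t (dir i)); rewrite {1 2}Ew opprK subrK oppr_eq0 on_lineN.
by rewrite !scalev_eq0 (negbTE s0) (negbTE t0) !dir_neq0 !on_lineZ ?on_line_dir.
Qed.

Lemma line_colour_sum x y w :
  (exists a, line_colour a = x /\ line_colour (w - a) = y) <->
  line_colour w \in atom_comp x y.
Proof.
case: x => [i|]; last first.
  rewrite in_set1; split=> [[a [/eqP]] | /eqP <-].
    by rewrite line_colour_eq0 => /eqP->; rewrite subr0 => ->.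
  by exists 0; rewrite subr0; split=> //; apply/eqP; rewrite line_colour_eq0.
case: y => [j|]; last first.
  rewrite in_set1; split=> [[a [<- /eqP]] | /eqP wi]; last first.
    by exists w; rewrite subrr; split=> //; apply/eqP; rewrite line_colour_eq0.
  by rewrite line_colour_eq0 subr_eq0 => /eqP->.
have geom :
    (exists a, line_colour a = Some i /\ line_colour (w - a) = Some j) <->
    (exists a, [/\ a != 0, on_line i a, w - a != 0 & on_line j (w - a)]).
  split=> -[a]; last by case=> ? ? ? ?; exists a; rewrite !line_colourP.
  by rewrite !line_colourP => -[[? ?] [? ?]]; exists a.
apply: (iff_trans geom); rewrite /atom_comp; case: eqVneq => [<- | neq_ij].
  apply: (iff_trans (same_line_sum i w)); rewrite !inE line_colour_eq0.
  have [-> | w0] := eqVneq w 0; first by rewrite on_line0.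
  by split=> [iw | /eqP/line_colourP[]//]; apply/eqP/line_colourP.
apply: (iff_trans (two_lines_sum w neq_ij)); rewrite inE.
have [-> | w0] := eqVneq w 0.
  by have /eqP-> : line_colour 0 == None by rewrite line_colour_eq0.
have [k kw] := on_some_line w.
have -> : line_colour w = Some k by apply/line_colourP.
by rewrite !(on_line_unique _ w0 kw).
Qed.

End PlaneColouring.

Local Close Scope ring_scope.

Theorem corollary9 (p : nat) (hp : prime_power p) (hp3 : 3 <= p) (m : nat) (hm : 1 <= m) :
  exists (D : finType) (theta : Lelt p -> {set D * D}),
    #|D| = p ^ (2 * m) /\ weak_rep theta.
Proof.
have [q [k [q_prime [k_gt0 p_qk]]]] := hp.
have [F _ card_qk] := pPrimePowerField q_prime k_gt0.
have card_F : #|F| = p by rewrite p_qk.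
exists {ffun 'I_m -> plane F}, (coord_rel (line_colour card_F) m); split.
  by rewrite card_ffun card_prod card_ord card_F expnM mulnn.
apply: coord_rel_weak_rep hm.
- exact: line_colour_eq0.
- exact: line_colour_opp.
- exact: line_colour_surj.
- exact: line_colour_sum hp3.
Qed.
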